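(* Let $T$ be a tree, $A\in\mathcal R(T)$, and let $T_1,\dots,T_c$ be mutually independent subtrees of $T$. (1) If $\mathrm{nullity}(A)>P(T\setminus(T_1\cup\dots\cup T_c))$, then at least one of $A[T_1],\dots,A[T_c]$ is singular. (2) If $\lambda\in\sigma(A)$ with $\mathrm{mult}(\lambda,A)>P(T\setminus(T_1\cup\dots\cup T_c))$, then $\lambda$ is an eigenvalue of at least one of $A[T_1],\dots,A[T_c]$.
   Context: $\mathcal R(T)$ is the set of real matrices indexed by $V(T)$ with $a_{ij}\ne0$ iff $\{i,j\}\in E(T)$ for $i\ne j$, and $a_{ij}a_{ji}>0$ on every edge; diagonal arbitrary. $A[T_i]$ is the principal submatrix on $V(T_i)$. Subtrees $T_1,T_2$ are independent if no edge of $T$ joins them. A path cover of $G$ is a set of vertex-disjoint induced paths covering $V(G)$; $P(G)$ is the minimum size of a path cover. $\mathrm{mult}(\lambda,A)$ is the algebraic multiplicity of $\lambda$ (matrices in $\mathcal R(T)$ are diagonally similar to real symmetric matrices). *)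

From HB Require Import structures.
From mathcomp Require Import all_boot all_order all_algebra.
From mathcomp Require Import boolp reals.
Set Implicit Arguments. Unset Strict Implicit. Unset Printing Implicit Defensive.
Import Order.TTheory GRing.Theory Num.Theory.
Local Open Scope ring_scope.

Definition simple_graph (n : nat) (e : rel 'I_n) : Prop :=
  irreflexive e /\ symmetric e.

Definition induced (n : nat) (e : rel 'I_n) (S : {set 'I_n}) : rel 'I_n :=
  [rel x y | [&& x \in S, y \in S & e x y]].

Definition nedges (n : nat) (e : rel 'I_n) : nat :=
  #|[set p : 'I_n * 'I_n | e p.1 p.2]|./2.

Definition is_tree (n : nat) (e : rel 'I_n) : Prop :=
  simple_graph e /\ (0 < n)%N /\ (forall x y, connect e x y) /\
  nedges e = n.-1.

Definition is_subtree (n : nat) (e : rel 'I_n) (S : {set 'I_n}) : Prop :=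
  S != set0 /\ {in S &, forall x y, connect (induced e S) x y}.

Definition mutually_independent (n c : nat) (e : rel 'I_n)
  (Ts : 'I_c -> {set 'I_n}) : Prop :=
  forall i j : 'I_c, i != j ->
    [disjoint Ts i & Ts j] /\
    (forall x y, x \in Ts i -> y \in Ts j -> ~~ e x y).

Definition induced_path (n : nat) (e : rel 'I_n) (S : {set 'I_n}) : Prop :=
  exists s : seq 'I_n, [/\ s != [::], uniq s, S = [set x in s] &
    forall (x0 : 'I_n) (a b : nat), (a < size s)%N -> (b < size s)%N ->
      e (nth x0 s a) (nth x0 s b) = ((a == b.+1) || (b == a.+1))].

Definition path_cover (n : nat) (e : rel 'I_n) (W : {set 'I_n})
  (C : {set {set 'I_n}}) : Prop :=
  partition C W /\ forall S, S \in C -> induced_path e S.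

(* P(G[W]): minimum size of a path cover (the singleton cover has size
   #|W| <= n, so starting the min at n is harmless) *)
Definition path_cover_number (n : nat) (e : rel 'I_n) (W : {set 'I_n}) : nat :=
  \big[minn/n]_(C : {set {set 'I_n}} | `[< path_cover e W C >]) #|C|.

Definition in_RT (R : realType) (n : nat) (e : rel 'I_n) (A : 'M[R]_n) : Prop :=
  forall i j : 'I_n, i != j ->
    (A i j != 0 <-> e i j) /\ (e i j -> 0 < A i j * A j i).

Definition psubmx (R : realType) (n : nat) (A : 'M[R]_n) (S : {set 'I_n})
  : 'M[R]_#|S| :=
  \matrix_(i, j) A (enum_val i) (enum_val j).

Definition nullity (R : realType) (n : nat) (A : 'M[R]_n) : nat := (n - \rank A)%N.

Definition alg_mult (R : realType) (n : nat) (A : 'M[R]_n) (lam : R) : nat :=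
  mup lam (char_poly A).

From HB Require Import structures.
From mathcomp Require Import all_boot all_order all_algebra.
From mathcomp Require Import boolp reals.
From mathcomp Require Import ring zify.
Set Implicit Arguments. Unset Strict Implicit. Unset Printing Implicit Defensive.
Import Order.TTheory GRing.Theory Num.Theory.
Local Open Scope ring_scope.

(* Proof of Theorem 9.  Let T_1, ..., T_c be independent subtrees of the tree
   T, put W = T \ (T_1 u ... u T_c), and fix a minimum path cover of W, each
   path oriented from a first vertex.

   (1) If every A[T_i] is nonsingular, a vector y with y A = 0 that vanishes
   at the first vertices of the paths vanishes everywhere.  This is proved by
   leaf elimination on a general forcing system (section LeafElimination):
   a leaf l of the current vertex set is either a block vertex (handled by a
   Schur complement when A l l != 0, or together with its neighbour when
   A l l = 0) or a path vertex (removed directly if it starts its path,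
   recovered from its predecessor otherwise).  Hence nullity A <= P(W).

   (2) A matrix in R(T) is diagonally similar to a symmetric one, so the
   kernel and image of A - lam meet trivially and the algebraic multiplicity
   of lam is at most nullity (A - lam); apply (1) to A - lam. *)

Section TreeLeaves.
Variables (n : nat) (e : rel 'I_n).

Definition arcs : {set 'I_n * 'I_n} := [set p | e p.1 p.2].

Definition reach (X : {set 'I_n}) k :=
  iter k (fun S : {set 'I_n} => S :|: [set x | [exists y in S, e x y]]) X.

Lemma reachS (X : {set 'I_n}) k x :
  (x \in reach X k.+1) = (x \in reach X k) || [exists y in reach X k, e x y].
Proof. by rewrite /reach iterS !inE. Qed.

Lemma reach_path (X : {set 'I_n}) p x :
  path e x p -> last x p \in X -> x \in reach X (size p).
Proof.
elim: p x => [|y p IH] x /=; first by move=> _ ->.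
move=> /andP [exy py] ly; rewrite reachS; apply/orP; right.
by apply/exists_inP; exists y => //; apply: IH.
Qed.

Lemma descent_to (X : {set 'I_n}) : X != set0 -> (forall x y, connect e x y) ->
  exists f : 'I_n -> 'I_n, exists d : 'I_n -> nat,
    forall x, x \notin X -> e x (f x) /\ (d (f x) < d x)%N.
Proof.
move=> /set0Pn [u0 u0X] conn.
have exk x : exists k, x \in reach X k.
  have /connectP [p px lp] := conn x u0.
  by exists (size p); apply: reach_path => //; rewrite -lp.
pose d x := ex_minn (exk x).
have dP x : x \in reach X (d x) by rewrite /d; case: ex_minnP.
have dM x k : x \in reach X k -> (d x <= k)%N by rewrite /d; case: ex_minnP => m _ /(_ k).
exists (fun x => odflt x [pick y | (d y < d x)%N && e x y]), d => x xX.
case: pickP => [y /andP [dy xy] //|none]; exfalso.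
have := dP x; case dx: (d x) => [|k].
  by rewrite /reach /= => xX'; rewrite xX' in xX.
rewrite reachS => /orP [xk|/exists_inP [y yk xy]].
  by move: (dM x k xk); rewrite dx ltnn.
by move: (none y); rewrite xy andbT dx ltnS (dM y k yk).
Qed.

Lemma tree_arcs_lt : is_tree e -> (#|arcs| < 2 * n)%N.
Proof.
move=> [_ [n0 [_ ned]]]; move: ned; rewrite /nedges -/arcs => ned.
have := odd_double_half #|arcs|; rewrite ned.
have : (odd #|arcs| <= 1)%N by case: odd.
lia.
Qed.

Definition pick_two (x : 'I_n) (A : {set 'I_n}) : 'I_n * 'I_n :=
  let y := odflt x [pick y in A] in (y, odflt x [pick z in A :\ y]).

Lemma pick_twoP x (A : {set 'I_n}) : (1 < #|A|)%N ->
  [/\ (pick_two x A).1 \in A, (pick_two x A).2 \in A & (pick_two x A).1 != (pick_two x A).2].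
Proof.
rewrite /pick_two; case: pickP => [y yA|none]; last by rewrite (eq_card0 none).
rewrite (cardsD1 y) yA /=; case: pickP => [z /setD1P [zy zA] _|none]; last first.
  by rewrite (eq_card0 none).
by rewrite ?yA zA eq_sym zy.
Qed.

(* If every vertex of X has two neighbours in X, the vertices of X with
   two of their arcs, and the other vertices with the arc towards X in both
   directions, give 2n distinct arcs. *)
Lemma many_arcs (X : {set 'I_n}) (f : 'I_n -> 'I_n) (d : 'I_n -> nat) :
  symmetric e ->
  (forall x, x \notin X -> e x (f x) /\ (d (f x) < d x)%N) ->
  (forall x, x \in X -> (1 < #|[set y in X | e x y]|)%N) ->
  (2 * n <= #|arcs|)%N.
Proof.
move=> e_sym fP deg2.
pose g1 x := (pick_two x [set y in X | e x y]).1.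
pose g2 x := (pick_two x [set y in X | e x y]).2.
have gP x : x \in X ->
    [/\ g1 x \in X, e x (g1 x), g2 x \in X, e x (g2 x) & g1 x != g2 x].
  move=> xX; have [] := pick_twoP x (deg2 x xX); rewrite !inE.
  by move=> /andP [-> ->] /andP [-> ->].
pose h (p : 'I_n * bool) := let: (x, b) := p in
  if x \in X then (x, if b then g1 x else g2 x)
  else if b then (x, f x) else (f x, x).
have no2cycle x x' : x \notin X -> x' \notin X -> x = f x' -> f x = x' -> False.
  move=> xX x'X E1 E2; have := (fP x xX).2; have := (fP x' x'X).2.
  by rewrite -E1 E2 => h1 h2; move: (ltn_trans h1 h2); rewrite ltnn.
have hinj : injective h.
  move=> [x b] [x' b']; rewrite /h.
  case xX: (x \in X); case x'X: (x' \in X).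
  - have [_ _ _ _ g12] := gP x xX.
    by case: b; case: b' => -[E1 E2]; subst x' => //; rewrite E2 eqxx in g12.
  - have [g1X _ g2X _ _] := gP x xX.
    by case: b; case: b' => -[E1 E2];
      first [ by rewrite -E1 xX in x'X | by rewrite -E2 ?g1X ?g2X in x'X ].
  - have [g1X _ g2X _ _] := gP x' x'X.
    by case: b; case: b' => -[E1 E2];
      first [ by rewrite E1 x'X in xX | by rewrite E2 ?g1X ?g2X in xX ].
  - case: b; case: b' => -[E1 E2]; try by rewrite ?E1 ?E2.
    + by case: (no2cycle x x' (negbT xX) (negbT x'X)).
    + by case: (no2cycle x' x (negbT x'X) (negbT xX)).
have hP p : h p \in arcs.
  case: p => x b; rewrite inE /h; case xX: (x \in X); case: b => /=.
  - by have [] := gP x xX.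
  - by have [] := gP x xX.
  - by have [] := fP x (negbT xX).
  - by rewrite e_sym; have [] := fP x (negbT xX).
have : (#|[set: 'I_n * bool]| <= #|arcs|)%N.
  rewrite -(card_imset _ hinj); apply: subset_leq_card.
  by apply/subsetP => _ /imsetP [p _ ->].
by rewrite cardsT card_prod card_ord card_bool mulnC.
Qed.

Lemma tree_has_leaf : is_tree e -> forall X : {set 'I_n}, X != set0 ->
  exists2 l, l \in X & (#|[set y in X | e l y]| <= 1)%N.
Proof.
move=> tree X X0; have [[_ e_sym] [_ [conn _]]] := tree.
have [/exists_inP [l lX leaf]|/exists_inPn deg2] :=
  boolP [exists x in X, #|[set y in X | e x y]| <= 1]%N; first by exists l.
have [f [d fP]] := descent_to X0 conn.
have deg2' x : x \in X -> (1 < #|[set y in X | e x y]|)%N.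
  by move=> xX; rewrite ltnNge; apply: deg2.
by have := many_arcs e_sym fP deg2'; rewrite leqNgt tree_arcs_lt.
Qed.
End TreeLeaves.

Section LeafElimination.
Variables (R : fieldType) (n : nat) (e : rel 'I_n).
Hypotheses (e_irr : irreflexive e) (e_sym : symmetric e).

Definition pattern_on (U : {set 'I_n}) (B : 'I_n -> 'I_n -> R) : Prop :=
  {in U &, forall r u, r != u -> (B r u != 0) = e r u}.

Definition nonsingular_on (T : {set 'I_n}) (B : 'I_n -> 'I_n -> R) : Prop :=
  forall w : 'I_n -> R, {in T, forall r, \sum_(u in T) B r u * w u = 0} ->
  {in T, forall u, w u = 0}.

Definition path_end (W : {set 'I_n}) (nxt : 'I_n -> option 'I_n) (r : 'I_n) :=
  (r \in W) && (nxt r == None).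

(* Elimination of the vertex l by a Schur complement: only the diagonal
   changes, since l is a leaf. *)
Definition schur_leaf (B : 'I_n -> 'I_n -> R) (l : 'I_n) r u : R :=
  if r == u then B r r - B r l * B l r / B l l else B r u.

Lemma pattern0 (U : {set 'I_n}) B r u : pattern_on U B -> r \in U -> u \in U ->
  r != u -> ~~ e r u -> B r u = 0.
Proof. by move=> P rU uU ru /negPf eru; apply/eqP; move: (P r u rU uU ru); rewrite eru => /negbFE. Qed.

Lemma patternN0 (U : {set 'I_n}) B r u : pattern_on U B -> r \in U -> u \in U ->
  e r u -> B r u != 0.
Proof.
by move=> P rU uU eru; rewrite P //; apply: contraTneq eru => ->; rewrite e_irr.
Qed.

Lemma pattern_sub (U U' : {set 'I_n}) B : U' \subset U -> pattern_on U B -> pattern_on U' B.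
Proof. by move=> sU P r u rU uU; apply: P; apply: (subsetP sU). Qed.

Lemma sum_single (F : 'I_n -> R) (S : {set 'I_n}) a : a \in S ->
  {in S, forall u, u != a -> F u = 0} -> \sum_(u in S) F u = F a.
Proof.
move=> aS F0; rewrite (big_setD1 a) //= big1 ?addr0 // => u /setD1P [ua uS].
exact: F0.
Qed.

Lemma schur_leaf_sum B l (S : {set 'I_n}) r (f : 'I_n -> R) : r \in S ->
  \sum_(u in S) schur_leaf B l r u * f u =
  \sum_(u in S) B r u * f u - B r l * B l r / B l l * f r.
Proof.
move=> rS; rewrite !(big_setD1 r rS) /= /schur_leaf eqxx.
rewrite (eq_bigr (fun u => B r u * f u)); last first.
  by move=> u /setD1P [ur _]; rewrite eq_sym (negPf ur).
ring.
Qed.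

(* The data of the leaf-elimination induction: a vertex set U, a block part
   T with nonsingular principal block, the complement U :\: T covered by
   paths (nxt gives the next vertex on a path, rank strictly increases), the
   vector v vanishing at the first vertex of every path, and v in the kernel
   of every row of B outside the path ends. *)
Variables (rank : 'I_n -> nat) (v : 'I_n -> R).

Record forcing_data (U T : {set 'I_n}) (B : 'I_n -> 'I_n -> R)
    (nxt : 'I_n -> option 'I_n) : Prop := ForcingData {
  fd_sub : T \subset U;
  fd_pattern : pattern_on U B;
  fd_nonsing : nonsingular_on T B;
  fd_succ : forall x y, x \in U :\: T -> nxt x = Some y ->
    [/\ y \in U :\: T, e x y & (rank x < rank y)%N];
  fd_inj : forall x x' y, x \in U :\: T -> x' \in U :\: T ->
    nxt x = Some y -> nxt x' = Some y -> x = x';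
  fd_start : forall x, x \in U :\: T ->
    (forall x', x' \in U :\: T -> nxt x' != Some x) -> v x = 0;
  fd_eq : forall r, r \in U -> ~~ path_end (U :\: T) nxt r ->
    \sum_(u in U) B r u * v u = 0 }.

Section Leaf.
Variables (U T : {set 'I_n}) (B : 'I_n -> 'I_n -> R).
Variables (nxt : 'I_n -> option 'I_n) (l : 'I_n).
Hypothesis D : forcing_data U T B nxt.
Hypothesis lU : l \in U.
Hypothesis l_leaf : (#|[set y in U | e l y]| <= 1)%N.
Hypothesis IH : forall U' : {set 'I_n}, U' \proper U -> forall T' B' nxt',
  forcing_data U' T' B' nxt' -> {in U', forall u, v u = 0}.

Lemma leaf_nbr_uniq y y' : y \in U -> y' \in U -> e l y -> e l y' -> y = y'.
Proof. by move=> yU y'U ly ly'; move/card_le1_eqP: l_leaf; apply; rewrite inE ?yU ?y'U. Qed.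

Lemma leaf_far u : u \in U -> u != l -> ~~ e l u -> B l u = 0 /\ B u l = 0.
Proof.
move=> uU ul nlu; have P := fd_pattern D; split.
  by apply: pattern0 P _ _ _ nlu; rewrite // eq_sym.
by apply: pattern0 P _ _ ul _; rewrite // e_sym.
Qed.

Lemma leaf_far2 p u : p \in U -> e l p -> u \in U -> u != l -> u != p ->
  B l u = 0 /\ B u l = 0.
Proof.
move=> pU lp uU ul up; apply: leaf_far => //.
by apply: contra up => lu; rewrite (leaf_nbr_uniq uU pU lu lp).
Qed.

Lemma leaf_row_sum (S : {set 'I_n}) r (f : 'I_n -> R) : S \subset U :\ l ->
  r \in S -> B r l * (\sum_(u in S) B l u * f u) = B r l * (B l r * f r).
Proof.
move=> SU rS; have /setD1P [rl rU] := subsetP SU r rS.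
case: (boolP (e l r)) => [lr|nlr]; last by rewrite (leaf_far rU rl nlr).2 !mul0r.
congr (_ * _); apply: sum_single => // u uS ur.
have /setD1P [ul uU] := subsetP SU u uS.
by rewrite (leaf_far2 rU lr uU ul ur).1 mul0r.
Qed.

Lemma mem_setD_leaf (T' : {set 'I_n}) x : x != l ->
  (x \in (U :\ l) :\: T') = (x \in U :\: T').
Proof. by move=> xl; rewrite !inE xl. Qed.

Lemma vanish_at_leaf r : r \in U -> ~~ path_end (U :\: T) nxt r ->
  B r l != 0 -> {in U :\ l, forall u, v u = 0} -> {in U, forall u, v u = 0}.
Proof.
move=> rU nend Brl v0 u uU; case: (eqVneq u l) => [->|ul]; last first.
  by apply: v0; rewrite in_setD1 ul.
have := fd_eq D rU nend; rewrite (sum_single (a := l)) //.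
  by move/eqP; rewrite mulf_eq0 (negPf Brl) => /eqP.
by move=> x xU xl; rewrite v0 ?mulr0 // in_setD1 xl.
Qed.

(* l starts a path: v l = 0 and l can simply be deleted. *)
Lemma leaf_path_start : l \in U :\: T ->
  (forall x, x \in U :\: T -> nxt x != Some l) -> {in U, forall u, v u = 0}.
Proof.
move=> lW nopred; have vl := fd_start D lW nopred.
have W'P x : x \in (U :\ l) :\: T -> x \in U :\: T /\ x != l.
  by rewrite !inE => /and3P [-> -> ->].
have sumU r : \sum_(u in U) B r u * v u = \sum_(u in U :\ l) B r u * v u.
  by rewrite (big_setD1 l lU) /= vl mulr0 add0r.
suff v0 : {in U :\ l, forall u, v u = 0}.
  by move=> u uU; case: (eqVneq u l) => [->//|ul]; apply: v0; rewrite in_setD1 ul.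
apply: (IH (properD1 lU) (T' := T) (B' := B) (nxt' := nxt)); constructor.
- apply/subsetP => x xT; rewrite in_setD1 (subsetP (fd_sub D) x xT) andbT.
  by apply: contraTneq xT => ->; move: lW; rewrite in_setD => /andP [].
- exact: pattern_sub (subD1set U l) (fd_pattern D).
- exact: fd_nonsing D.
- move=> x y /W'P [xW xl] nx; have [yW exy rxy] := fd_succ D xW nx.
  split=> //; rewrite mem_setD_leaf //.
  by apply: contraNneq (nopred x xW) => <-; rewrite nx.
- by move=> x x' y /W'P [xW _] /W'P [x'W _]; exact: (fd_inj D xW x'W).
- move=> x /W'P [xW xl] nop'.
  case: (boolP [exists x' in U :\: T, nxt x' == Some x]); last first.
    by move/exists_inPn => nop; apply: (fd_start D xW) => x' /nop.
  move=> /exists_inP [x' x'W /eqP nx'].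
  have x'l : x' = l.
    apply/eqP; apply: contraTT isT => x'l.
    by have := nop' x'; rewrite mem_setD_leaf // x'W nx' eqxx => /(_ isT).
  subst x'; have [_ lx _] := fd_succ D lW nx'.
  have xU : x \in U by move: xW; rewrite in_setD => /andP [].
  have El := fd_eq D lU (ltac:(by rewrite /path_end nx' andbF)).
  rewrite (big_setD1 l lU) /= vl mulr0 add0r (sum_single (a := x)) in El.
  + by move/eqP: El; rewrite mulf_eq0 (negPf (patternN0 (fd_pattern D) lU xU lx)) => /eqP.
  + by rewrite in_setD1 xl.
  + move=> u /setD1P [ul uU] ux.
    by rewrite (leaf_far2 xU lx uU ul ux).1 mul0r.
- move=> r /setD1P [rl rU]; rewrite /path_end mem_setD_leaf // -sumU.
  exact: (fd_eq D rU).
Qed.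

(* l is preceded by q on its path: then l ends that path, q becomes a path
   end after deleting l, and the row of q recovers v l. *)
Lemma leaf_path_interior q : q \in U :\: T -> nxt q = Some l ->
  {in U, forall u, v u = 0}.
Proof.
move=> qW nq; have [lW ql' rql] := fd_succ D qW nq.
have qU : q \in U by move: qW; rewrite in_setD => /andP [].
have lq : e l q by rewrite e_sym.
have ql : q != l by apply: contraTneq lq => ->; rewrite e_irr.
have nl : nxt l = None.
  case E: (nxt l) => [y|] //; have [yW ly rly] := fd_succ D lW E.
  have yU : y \in U by move: yW; rewrite in_setD => /andP [].
  have yq := leaf_nbr_uniq yU qU ly lq; subst y.
  by move: (ltn_trans rly rql); rewrite ltnn.
pose nxt' x := if x == q then None else nxt x.
have nxt'P x y : nxt' x = Some y -> nxt x = Some y /\ x != q.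
  by rewrite /nxt'; case: eqP.
have W'P x : x \in (U :\ l) :\: T -> x \in U :\: T /\ x != l.
  by rewrite !inE => /and3P [-> -> ->].
apply: (vanish_at_leaf qU _ (patternN0 (fd_pattern D) qU lU ql')).
  by rewrite /path_end nq andbF.
apply: (IH (properD1 lU) (T' := T) (B' := B) (nxt' := nxt')); constructor.
- apply/subsetP => x xT; rewrite in_setD1 (subsetP (fd_sub D) x xT) andbT.
  by apply: contraTneq xT => ->; move: lW; rewrite in_setD => /andP [].
- exact: pattern_sub (subD1set U l) (fd_pattern D).
- exact: fd_nonsing D.
- move=> x y /W'P [xW xl] /nxt'P [nx xq]; have [yW exy rxy] := fd_succ D xW nx.
  split=> //; rewrite mem_setD_leaf //; apply: contraTneq xq => yl; subst y.
  by rewrite (fd_inj D xW qW nx nq) eqxx.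
- move=> x x' y /W'P [xW _] /W'P [x'W _] /nxt'P [nx _] /nxt'P [nx' _].
  exact: (fd_inj D xW x'W nx nx').
- move=> x /W'P [xW xl] nop'; apply: (fd_start D xW) => x' x'W; apply/eqP => nx'.
  have x'l : x' != l by apply/eqP => x'l; move: nx'; rewrite x'l nl.
  have x'q : x' != q by apply: contraNneq xl => x'q; move: nx'; rewrite x'q nq => -[->].
  have := nop' x'; rewrite mem_setD_leaf // x'W /nxt' (negPf x'q) nx' eqxx.
  by move=> /(_ isT).
- move=> r /setD1P [rl rU] nend.
  have rq : r != q.
    by apply: contraNneq nend => ->; rewrite /path_end mem_setD_leaf // qW /nxt' eqxx.
  have := fd_eq D rU; rewrite (big_setD1 l lU) /= (leaf_far2 qU lq rU rl rq).2.
  rewrite mul0r add0r; apply.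
  by move: nend; rewrite /path_end mem_setD_leaf // /nxt' (negPf rq).
Qed.

Lemma leaf_block_nbr : l \in T -> B l l = 0 -> exists2 p, p \in T & e l p.
Proof.
move=> lT Bll; have [/exists_inP [p pT lp]|/exists_inPn nonbr] :=
  boolP [exists p in T, e l p]; first by exists p.
pose w u : R := (u == l)%:R.
suff : w l = 0 by rewrite /w eqxx => /eqP; rewrite oner_eq0.
apply: (fd_nonsing D) (lT) => r rT.
rewrite (sum_single (a := l)) // ?/w ?eqxx ?mulr1; last first.
  by move=> u _ ul; rewrite (negPf ul) mulr0.
case: (eqVneq r l) => [->//|rl].
exact: (leaf_far (subsetP (fd_sub D) r rT) rl (nonbr r rT)).2.
Qed.

Lemma nonsing_remove_pair p : l \in T -> p \in T -> e l p -> B l l = 0 ->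
  nonsingular_on (T :\ l :\ p) B.
Proof.
move=> lT pT lp Bll w Hw.
have [TU pU] := (subsetP (fd_sub D), subsetP (fd_sub D) p pT).
have pl : p != l by apply: contraTneq lp => ->; rewrite e_irr.
have Bpl : B p l != 0 by apply: patternN0 (fd_pattern D) pU lU _; rewrite e_sym.
have T2P x : x \in T :\ l :\ p -> [/\ x \in T, x != l & x != p].
  by rewrite !in_setD1 => /and3P [-> -> ->].
pose w' u := if u == l then - (\sum_(x in T :\ l :\ p) B p x * w x) / B p l
             else if u == p then 0 else w u.
suff w'0 : {in T, forall u, w' u = 0}.
  by move=> u /T2P [uT ul up]; have := w'0 u uT; rewrite /w' (negPf ul) (negPf up).
apply: (fd_nonsing D) => r rT.
rewrite (big_setD1 l lT) /= (big_setD1 p) /=; last by rewrite in_setD1 pl.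
have -> : \sum_(u in T :\ l :\ p) B r u * w' u = \sum_(u in T :\ l :\ p) B r u * w u.
  by apply: eq_bigr => u /T2P [_ ul up]; rewrite /w' (negPf ul) (negPf up).
rewrite {2}/w' (negPf pl) eqxx mulr0 add0r {1}/w' eqxx.
case: (eqVneq r l) => [->|rl].
  rewrite Bll mul0r add0r big1 // => u /T2P [uT ul up].
  by rewrite (leaf_far2 pU lp (TU u uT) ul up).1 mul0r.
case: (eqVneq r p) => [->|rp]; first by field.
have rT2 : r \in T :\ l :\ p by rewrite !in_setD1 rp rl.
by rewrite (leaf_far2 pU lp (TU r rT) rl rp).2 mul0r add0r Hw.
Qed.

(* l is a block vertex with B l l = 0: the row of l forces v p = 0 at its
   neighbour p, and l and p are deleted together. *)
Lemma leaf_block_zero_diag : l \in T -> B l l = 0 -> {in U, forall u, v u = 0}.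
Proof.
move=> lT Bll; have [p pT lp] := leaf_block_nbr lT Bll.
have pU := subsetP (fd_sub D) p pT.
have pl : p != l by apply: contraTneq lp => ->; rewrite e_irr.
have notend x : x \in T -> ~~ path_end (U :\: T) nxt x.
  by move=> xT; rewrite /path_end in_setD xT.
have vp : v p = 0.
  have := fd_eq D lU (notend l lT); rewrite (sum_single (a := p)) //.
    by move/eqP; rewrite mulf_eq0 (negPf (patternN0 (fd_pattern D) lU pU lp)) => /eqP.
  move=> u uU up; case: (eqVneq u l) => [->|ul]; first by rewrite Bll mul0r.
  by rewrite (leaf_far2 pU lp uU ul up).1 mul0r.
have U2P x : x \in U :\ l :\ p -> [/\ x \in U, x != l & x != p].
  by rewrite !in_setD1 => /and3P [-> -> ->].
have eW : (U :\ l :\ p) :\: (T :\ l :\ p) = U :\: T.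
  apply/setP => x; rewrite !inE; case: (eqVneq x l) => [->|xl] /=.
    by rewrite lT !andbF.
  by case: (eqVneq x p) => [->|xp] /=; rewrite ?pT ?andbF.
apply: (vanish_at_leaf pU (notend p pT)).
  by apply: patternN0 (fd_pattern D) pU lU _; rewrite e_sym.
move=> u /setD1P [ul uU]; case: (eqVneq u p) => [->//|up].
have sub2 : U :\ l :\ p \proper U.
  exact: sub_proper_trans (subD1set _ _) (properD1 lU).
apply: (IH sub2 (T' := T :\ l :\ p) (B' := B) (nxt' := nxt)); last first.
  by rewrite !in_setD1 up ul.
constructor; rewrite ?eW.
- exact: setSD (setSD _ (fd_sub D)).
- exact: pattern_sub (subset_trans (subD1set _ _) (subD1set _ _)) (fd_pattern D).
- exact: nonsing_remove_pair.
- exact: fd_succ D.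
- exact: fd_inj D.
- exact: fd_start D.
- move=> r /U2P [rU rl rp] nend; have := fd_eq D rU nend.
  rewrite (big_setD1 l lU) /= (big_setD1 p) /=; last by rewrite in_setD1 pl.
  by rewrite vp mulr0 (leaf_far2 pU lp rU rl rp).2 mul0r !add0r.
Qed.

Lemma nonsing_schur : l \in T -> B l l != 0 -> nonsingular_on (T :\ l) (schur_leaf B l).
Proof.
move=> lT Bll w Hw.
have TlU : T :\ l \subset U :\ l := setSD _ (fd_sub D).
pose w' u := if u == l then - (\sum_(x in T :\ l) B l x * w x) / B l l else w u.
suff w'0 : {in T, forall u, w' u = 0}.
  by move=> u /setD1P [ul uT]; have := w'0 u uT; rewrite /w' (negPf ul).
apply: (fd_nonsing D) => r rT; rewrite (big_setD1 l lT) /= {1}/w' eqxx.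
have -> : \sum_(u in T :\ l) B r u * w' u = \sum_(u in T :\ l) B r u * w u.
  by apply: eq_bigr => u /setD1P [ul _]; rewrite /w' (negPf ul).
case: (eqVneq r l) => [->|rl]; first by field.
have rT' : r \in T :\ l by rewrite in_setD1 rl.
have := Hw r rT'; rewrite schur_leaf_sum // => /eqP; rewrite subr_eq0 => /eqP ->.
by rewrite mulNr mulrN mulrA (leaf_row_sum _ TlU rT'); field.
Qed.

(* l lies in the block part with B l l != 0: eliminate it by a Schur
   complement, which v still satisfies on U :\ l. *)
Lemma leaf_block_schur : l \in T -> B l l != 0 -> {in U, forall u, v u = 0}.
Proof.
move=> lT Bll.
have notend x : x \in T -> ~~ path_end (U :\: T) nxt x.
  by move=> xT; rewrite /path_end in_setD xT.
have eW : (U :\ l) :\: (T :\ l) = U :\: T.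
  by apply/setP => x; rewrite !inE; case: eqP => [->|] /=; rewrite ?lT ?andbF.
apply: (vanish_at_leaf lU (notend l lT) Bll).
apply: (IH (properD1 lU) (T' := T :\ l) (B' := schur_leaf B l) (nxt' := nxt)).
constructor; rewrite ?eW.
- exact: setSD (fd_sub D).
- move=> r u /setD1P [_ rU] /setD1P [_ uU] ru.
  by rewrite /schur_leaf (negPf ru); exact: (fd_pattern D).
- exact: nonsing_schur.
- exact: fd_succ D.
- exact: fd_inj D.
- exact: fd_start D.
- move=> r /setD1P [rl rU] nend; rewrite schur_leaf_sum ?in_setD1 ?rl //.
  have := fd_eq D rU nend; have := fd_eq D lU (notend l lT).
  rewrite !(big_setD1 l lU) /=.
  set Sr := \sum_(u in U :\ l) B r u * v u; set Sl := \sum_(u in U :\ l) B l u * v u.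
  move=> /eqP El /eqP Er.
  have Sl_eq : Sl = - (B l l * v l) by apply/eqP; rewrite -addr_eq0 addrC El.
  have Sr_eq : Sr = - (B r l * v l) by apply/eqP; rewrite -addr_eq0 addrC Er.
  have HX := leaf_row_sum v (subxx _) (ltac:(by rewrite in_setD1 rl) : r \in U :\ l).
  rewrite -/Sl Sl_eq in HX.
  have -> : B r l * B l r / B l l * v r = B r l * (B l r * v r) / B l l by ring.
  by rewrite -HX Sr_eq; field.
Qed.
End Leaf.

Hypothesis has_leaf : forall X : {set 'I_n}, X != set0 ->
  exists2 l, l \in X & (#|[set y in X | e l y]| <= 1)%N.

Lemma forcing_vanish U T B nxt : forcing_data U T B nxt -> {in U, forall u, v u = 0}.
Proof.
move: {2}#|U| (leqnn #|U|) => k; elim: k U T B nxt => [|k IHk] U T B nxt hU D.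
  by move=> u; rewrite (card0_eq (eqP _)) // -leqn0.
have [->|/has_leaf [l lU l_leaf]] := eqVneq U set0; first by move=> u; rewrite inE.
have IH (U' : {set 'I_n}) : U' \proper U -> forall T' B' nxt',
    forcing_data U' T' B' nxt' -> {in U', forall u, v u = 0}.
  by move=> /proper_card ltU' T' B' nxt'; apply: IHk; rewrite -ltnS (leq_trans ltU').
have [lT|lT] := boolP (l \in T).
  have [Bll|Bll] := eqVneq (B l l) 0.
    exact: (leaf_block_zero_diag D lU l_leaf IH lT Bll).
  exact: (leaf_block_schur D lU l_leaf IH lT Bll).
have lW : l \in U :\: T by rewrite in_setD lT lU.
have [/exists_inP [q qW /eqP nq]|/exists_inPn nop] :=
  boolP [exists q in U :\: T, nxt q == Some l].
  exact: (leaf_path_interior D lU l_leaf IH qW nq).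
by apply: (leaf_path_start D lU l_leaf IH lW) => x /nop.
Qed.
End LeafElimination.

Section OrientedPaths.
Variables (n : nat) (e : rel 'I_n) (W : {set 'I_n}) (C : {set {set 'I_n}}).
Hypothesis C_partition : partition C W.

Variable sq : {set 'I_n} -> seq 'I_n.
Hypothesis sqP : forall S, S \in C ->
  [/\ sq S != [::], uniq (sq S), S = [set x in sq S] &
  forall (x0 : 'I_n) (a b : nat), (a < size (sq S))%N -> (b < size (sq S))%N ->
    e (nth x0 (sq S) a) (nth x0 (sq S) b) = ((a == b.+1) || (b == a.+1))].

Definition path_of x := pblock C x.
Definition path_seq x := sq (path_of x).
Definition path_pos x := index x (path_seq x).

Definition path_next x : option 'I_n :=
  if ((path_pos x).+1 < size (path_seq x))%N
  then Some (nth x (path_seq x) (path_pos x).+1) else None.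

Let coverC : cover C = W. Proof. by case/and3P: C_partition => /eqP. Qed.
Let trivC : trivIset C. Proof. by case/and3P: C_partition. Qed.

Lemma path_of_cover x : x \in W -> path_of x \in C.
Proof. by move=> xW; apply: pblock_mem; rewrite coverC. Qed.

Lemma mem_path_seq x : x \in W -> x \in path_seq x.
Proof.
move=> xW; have [_ _ E _] := sqP (path_of_cover xW).
have : x \in path_of x by rewrite mem_pblock coverC.
by rewrite {1}E inE.
Qed.

Lemma path_pos_lt x : x \in W -> (path_pos x < size (path_seq x))%N.
Proof. by move=> xW; rewrite /path_pos index_mem mem_path_seq. Qed.

Lemma nth_path_pos x x0 : x \in W -> nth x0 (path_seq x) (path_pos x) = x.
Proof.
by move=> xW; rewrite (set_nth_default x) ?path_pos_lt // nth_index ?mem_path_seq.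
Qed.

Lemma path_nth x i : x \in W -> (i < size (path_seq x))%N ->
  let y := nth x (path_seq x) i in
  [/\ y \in W, path_seq y = path_seq x & path_pos y = i].
Proof.
move=> xW lt /=; have [_ uq E _] := sqP (path_of_cover xW).
have yb : nth x (path_seq x) i \in path_of x by rewrite E inE mem_nth.
have sxe : path_seq (nth x (path_seq x) i) = path_seq x.
  by rewrite /path_seq /path_of (def_pblock trivC (path_of_cover xW) yb).
split=> //; last by rewrite /path_pos sxe index_uniq.
by rewrite -coverC; apply/bigcupP; exists (path_of x); first exact: path_of_cover.
Qed.

Lemma path_next_succ x y : x \in W -> path_next x = Some y ->
  [/\ y \in W, e x y & (path_pos x < path_pos y)%N].
Proof.
move=> xW; rewrite /path_next; case: ifP => // lt [<-].
have [yW _ iy] := path_nth xW lt; split => //; last by rewrite iy.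
have [_ _ _ He] := sqP (path_of_cover xW).
by have := He x _ _ (path_pos_lt xW) lt; rewrite (nth_path_pos x xW) eqxx orbT.
Qed.

Lemma path_next_inj x x' y : x \in W -> x' \in W ->
  path_next x = Some y -> path_next x' = Some y -> x = x'.
Proof.
move=> xW x'W; rewrite /path_next; case: ifP => // lt [E1]; case: ifP => // lt' [E2].
have [_ sx1 i1] := path_nth xW lt; have [_ sx2 i2] := path_nth x'W lt'.
rewrite E1 in sx1 i1; rewrite E2 in sx2 i2.
have sxe : path_seq x' = path_seq x by rewrite -sx1 -sx2.
have [eqi] : (path_pos x).+1 = (path_pos x').+1 by rewrite -i1 -i2.
by rewrite -(nth_path_pos x xW) -(nth_path_pos x x'W) sxe eqi.
Qed.

Lemma path_start x : x \in W ->
  (forall x', x' \in W -> path_next x' != Some x) -> path_pos x = 0%N.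
Proof.
move=> xW nop; case E: (path_pos x) => [//|i].
have ilt : (i < size (path_seq x))%N by rewrite (leq_trans _ (path_pos_lt xW)) // E.
have [x'W sxe ix'] := path_nth xW ilt.
have := nop _ x'W; rewrite /path_next sxe ix' -E path_pos_lt //.
by rewrite (nth_path_pos _ xW) eqxx.
Qed.

Lemma card_path_starts : (#|[set x in W | path_pos x == 0%N]| <= #|C|)%N.
Proof.
rewrite -(@card_in_imset _ _ path_of); last first.
  move=> x x' /setIdP [xW /eqP i0] /setIdP [x'W /eqP i0'] bb.
  have sxe : path_seq x' = path_seq x by rewrite /path_seq bb.
  by rewrite -(nth_path_pos x xW) -(nth_path_pos x x'W) sxe i0 -sxe i0'.
apply: subset_leq_card; apply/subsetP => S /imsetP [x /setIdP [xW _] ->].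
exact: path_of_cover.
Qed.
End OrientedPaths.

Lemma path_cover_successor n (e : rel 'I_n) (W : {set 'I_n}) (C : {set {set 'I_n}}) :
  path_cover e W C ->
  exists nxt : 'I_n -> option 'I_n, exists rank : 'I_n -> nat,
  exists2 H : {set 'I_n}, (#|H| <= #|C|)%N &
  [/\ forall x y, x \in W -> nxt x = Some y -> [/\ y \in W, e x y & (rank x < rank y)%N],
      forall x x' y, x \in W -> x' \in W -> nxt x = Some y -> nxt x' = Some y -> x = x'
    & forall x, x \in W -> (forall x', x' \in W -> nxt x' != Some x) -> x \in H].
Proof.
move=> [part Hind].
have /choice [sq sqP] : forall S : {set 'I_n}, exists s : seq 'I_n, S \in C ->
    [/\ s != [::], uniq s, S = [set x in s] &
    forall (x0 : 'I_n) (a b : nat), (a < size s)%N -> (b < size s)%N ->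
      e (nth x0 s a) (nth x0 s b) = ((a == b.+1) || (b == a.+1))].
  by move=> S; case: (boolP (S \in C)) => [/Hind [s Hs]|_]; [exists s | exists [::]].
exists (path_next C sq), (path_pos C sq), [set x in W | path_pos C sq x == 0%N].
  exact: (card_path_starts part sqP).
split; [exact: (path_next_succ part sqP) | exact: (path_next_inj part sqP) |].
by move=> x xW nop; rewrite inE xW (path_start part sqP xW nop).
Qed.

Definition offdiag_pattern (F : fieldType) n (e : rel 'I_n) (A : 'M[F]_n) : Prop :=
  forall i j, i != j -> (A i j != 0) = e i j.

Lemma offdiag_pattern_shift (F : fieldType) n (e : rel 'I_n) (A : 'M[F]_n) lam :
  offdiag_pattern e A -> offdiag_pattern e (A - lam%:M).
Proof. by move=> Apat i j ij; rewrite !mxE (negPf ij) mulr0n subr0 Apat. Qed.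

Lemma path_cover_number_cases n (e : rel 'I_n) (W : {set 'I_n}) :
  path_cover_number e W = n \/
  exists2 C, path_cover e W C & #|C| = path_cover_number e W.
Proof.
rewrite /path_cover_number.
apply: (big_ind (fun m => m = n \/ exists2 C, path_cover e W C & #|C| = m)).
- by left.
- by move=> x y Hx Hy; case: leqP.
- by move=> C /asboolP HC; right; exists C.
Qed.

Lemma left_kernel_bound (F : fieldType) n (A : 'M[F]_n) (H : {set 'I_n}) :
  (forall y : 'rV[F]_n, y *m A = 0 -> {in H, forall x, y 0 x = 0} -> y = 0) ->
  (n - \rank A <= #|H|)%N.
Proof.
move=> key; pose E := \matrix_(i < n, j < #|H|) ((i == enum_val j)%:R : F).
have Z : (kermx A :&: kermx E)%MS = 0.
  apply/row_matrixP => i; rewrite row0; apply: key.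
    by apply/sub_kermxP; exact: submx_trans (row_sub i _) (capmxSl _ _).
  move=> x xH; have /sub_kermxP yE : (row i (kermx A :&: kermx E) <= kermx E)%MS.
    exact: submx_trans (row_sub i _) (capmxSr _ _).
  have := congr1 (fun M : 'rV[F]_#|H| => M 0 (enum_rank_in xH x)) yE.
  rewrite mxE (bigD1 x) //= big1 ?addr0; last first.
    by move=> j jx; rewrite !mxE (enum_rankK_in xH xH) (negPf jx) mulr0.
  by rewrite !mxE (enum_rankK_in xH xH) eqxx mulr1.
rewrite -mxrank_ker -(mxrank_mul_ker (kermx A) E) Z mxrank0 addn0.
exact: rank_leq_col.
Qed.

Lemma blocks_nonsingular (R : realType) n (e : rel 'I_n) (A : 'M[R]_n) c
    (Ts : 'I_c -> {set 'I_n}) :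
  symmetric e -> offdiag_pattern e A -> mutually_independent e Ts ->
  (forall i, \det (psubmx A (Ts i)) != 0) ->
  nonsingular_on (\bigcup_(i < c) Ts i) (fun r u => A u r).
Proof.
move=> e_sym Apat indep detnz w Hw u0 /bigcupP [i _ u0i].
set S := Ts i; pose z : 'rV[R]_#|S| := \row_j w (enum_val j).
have zA : z *m psubmx A S = 0.
  apply/rowP => j; rewrite !mxE; set r := enum_val j.
  have rS : r \in S := enum_valP j.
  rewrite -[RHS](Hw r (ltac:(by apply/bigcupP; exists i))).
  rewrite (big_setID S) /= (setIidPr _); last first.
    by apply/subsetP => x xS; apply/bigcupP; exists i.
  rewrite [X in _ = _ + X]big1 ?addr0; last first.
    move=> x /setDP [/bigcupP [j' _ xj] xS].
    have ij : i != j' by apply: contraNneq xS => ij; rewrite /S ij.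
    have [_ noedge] := indep i j' ij.
    have xr : x != r by apply: contraNneq xS => ->.
    have := Apat x r xr; rewrite e_sym (negPf (noedge r x rS xj)).
    by move/negbFE/eqP => ->; rewrite mul0r.
  rewrite [RHS]big_enum_val /=; apply: eq_bigr => k _.
  by rewrite !mxE mulrC.
have unitA : psubmx A S \in unitmx by rewrite unitmxE unitfE; apply: detnz.
have z0 : z = 0 by rewrite -(mulmxK unitA z) zA mul0mx.
have := congr1 (fun M : 'rV[R]_#|S| => M 0 (enum_rank_in u0i u0)) z0.
by rewrite !mxE enum_rankK_in.
Qed.

Lemma nullity_le_path_cover (R : realType) n (e : rel 'I_n) (A : 'M[R]_n) c
    (Ts : 'I_c -> {set 'I_n}) :
  is_tree e -> offdiag_pattern e A -> mutually_independent e Ts ->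
  (forall i, \det (psubmx A (Ts i)) != 0) ->
  (nullity A <= path_cover_number e (~: \bigcup_(i < c) Ts i))%N.
Proof.
move=> tree Apat indep detnz; have [[e_irr e_sym] _] := tree.
set T := \bigcup_(i < c) Ts i.
have [->|[C cover <-]] := path_cover_number_cases e (~: T).
  by rewrite /nullity leq_subr.
have [nxt [rank [H cardH [succ inj start]]]] := path_cover_successor cover.
apply: leq_trans cardH; apply: left_kernel_bound => y yA yH; apply/rowP => u.
rewrite mxE; apply: (forcing_vanish e_irr e_sym (tree_has_leaf tree) (U := setT)
  (T := T) (B := fun r u => A u r) (nxt := nxt) (rank := rank)); last by [].
constructor; rewrite ?setTD.
- exact: subsetT.
- by move=> r x _ _ rx; rewrite Apat 1?eq_sym // e_sym.
- exact: blocks_nonsingular.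
- exact: succ.
- exact: inj.
- by move=> x xW nop; apply: yH; apply: start.
- move=> r _ _; have := congr1 (fun M : 'rV[R]_n => M 0 r) yA; rewrite !mxE => yAr.
  rewrite -[RHS]yAr; apply: eq_big => [x|x _]; [by rewrite inE | by rewrite mulrC].
Qed.

Section Multiplicity.
Variable F : fieldType.

Lemma char_poly_similar n (P A D : 'M[F]_n) : P \in unitmx -> P *m A = D *m P ->
  char_poly A = char_poly D.
Proof.
move=> Pu PA; pose Pp := map_mx (@polyC F) P.
have E : Pp *m char_poly_mx A = char_poly_mx D *m Pp.
  by rewrite /char_poly_mx mulmxBr mulmxBl scalar_mxC -!map_mxM PA.
have nz : (\det P)%:P != 0 :> {poly F} by rewrite polyC_eq0 -unitfE -unitmxE.
apply: (mulfI nz); have := congr1 determinant E.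
by rewrite !det_mulmx /Pp det_map_mx /= [RHS]mulrC.
Qed.

Lemma char_poly_scalar k (lam : F) : char_poly (lam%:M : 'M[F]_k) = ('X - lam%:P) ^+ k.
Proof.
rewrite char_poly_trig ?scalar_mx_is_trig //.
rewrite (eq_bigr (fun _ => 'X - lam%:P)); last by move=> i _; rewrite mxE eqxx.
by rewrite prodr_const card_ord.
Qed.

(* If the kernel and the image of M = A - lam meet trivially, then A is
   similar to a block diagonal matrix diag(lam, C) with lam not an
   eigenvalue of C; so the algebraic multiplicity of lam is dim ker M.
   Sizes are split as k + r with k = dim ker M, r = rank M. *)
Lemma mup_le_rank_ker_split k r (A : 'M[F]_(k + r)) lam :
  let M := A - lam%:M in
  (kermx M :&: M)%MS = 0 -> \rank (kermx M) = k -> (mup lam (char_poly A) <= k)%N.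
Proof.
move=> M cap0 hk.
have hr : \rank M = r.
  apply/eqP; rewrite -(eqn_add2l k) -{1}hk mxrank_ker subnK ?rank_leq_row //.
pose K := castmx (hk, erefl (k + r)%N) (row_base (kermx M)).
pose Rb := castmx (hr, erefl (k + r)%N) (row_base M).
have eK : (K :=: kermx M)%MS by apply: eqmx_trans (eqmx_cast _ _) (eq_row_base _).
have eR : (Rb :=: M)%MS by apply: eqmx_trans (eqmx_cast _ _) (eq_row_base _).
pose P := col_mx K Rb.
have Pu : P \in unitmx.
  rewrite -row_free_unit /row_free -addsmxE mxrank_disjoint_sum; first by rewrite eK eR hk hr.
  by apply/eqP; rewrite -submx0 (cap_eqmx eK eR) cap0 sub0mx.
have KA : K *m A = lam *: K.
  have : K *m M = 0 by apply/sub_kermxP; rewrite eK.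
  by rewrite /M mulmxBr mul_mx_scalar => /eqP; rewrite subr_eq0 => /eqP.
have [C0 RC] : exists C0 : 'M_r, Rb *m M = C0 *m Rb by apply/submxP; rewrite eR submxMl.
have RA : Rb *m A = (C0 + lam%:M) *m Rb.
  have -> : A = M + lam%:M by rewrite /M subrK.
  by rewrite mulmxDr RC mulmxDl mul_mx_scalar mul_scalar_mx.
pose D := block_mx (lam%:M : 'M_k) 0 0 (C0 + lam%:M).
have PA : P *m A = D *m P.
  by rewrite /P /D mul_col_mx mul_block_col !mul0mx addr0 add0r KA RA mul_scalar_mx.
rewrite (char_poly_similar Pu PA) /char_poly /D char_block_diag_mx det_ublock.
rewrite -/(char_poly _) -/(char_poly _) char_poly_scalar mupMl ?mup_XsubCX ?eqxx //.
rewrite -eigenvalue_root_char /eigenvalue /eigenspace addrK negbK.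
have Rfree : row_free Rb by rewrite /row_free eR hr.
apply/eqP/row_matrixP => i; rewrite row0; set y := row i _.
have yC : y *m C0 = 0 by apply/sub_kermxP; exact: row_sub.
have : (y *m Rb <= kermx M :&: M)%MS.
  rewrite sub_capmx -eR submxMl andbT.
  by apply/sub_kermxP; rewrite -mulmxA RC mulmxA yC mul0mx.
by rewrite cap0 submx0 mulmx_free_eq0 // => /eqP.
Qed.

Lemma cast_square_invariants m n (mn : m = n) (A : 'M[F]_n) lam :
  let A' := castmx (esym mn, esym mn) A in
  [/\ char_poly A' = char_poly A,
      \rank (kermx (A' - lam%:M)) = \rank (kermx (A - lam%:M)) &
      (kermx (A - lam%:M) :&: (A - lam%:M))%MS = 0 ->
      (kermx (A' - lam%:M) :&: (A' - lam%:M))%MS = 0].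
Proof. by case: n / mn A => A; rewrite /= castmx_id. Qed.

Lemma mup_le_rank_ker n (A : 'M[F]_n) lam :
  (kermx (A - lam%:M) :&: (A - lam%:M))%MS = 0 ->
  (mup lam (char_poly A) <= \rank (kermx (A - lam%:M)))%N.
Proof.
move=> cap0; have kr : addn (\rank (kermx (A - lam%:M))) (\rank (A - lam%:M)) = n.
  by rewrite mxrank_ker subnK // rank_leq_row.
have [c1 c2 c3] := cast_square_invariants kr A lam.
by rewrite -c1; apply: mup_le_rank_ker_split; [apply: c3 | apply: c2].
Qed.
End Multiplicity.

Section Symmetrizer.
Variables (R : realFieldType) (n : nat) (e : rel 'I_n) (A : 'M[R]_n).
Hypotheses (e_irr : irreflexive e) (e_sym : symmetric e).
Hypothesis has_leaf : forall X : {set 'I_n}, X != set0 ->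
  exists2 l, l \in X & (#|[set y in X | e l y]| <= 1)%N.
Hypothesis Apat : offdiag_pattern e A.
Hypothesis Apos : forall i j, e i j -> 0 < A i j * A j i.

(* Positive weights h with A i j h j = A j i h i on U, built leaf by leaf:
   a leaf l of U gets the weight forced by its unique neighbour. *)
Lemma symmetrizer_on k (U : {set 'I_n}) : (#|U| <= k)%N ->
  exists2 h : 'I_n -> R, (forall i, 0 < h i) &
    {in U &, forall i j, A i j * h j = A j i * h i}.
Proof.
elim: k U => [|k IH] U hU.
  by exists (fun _ => 1) => // i j; rewrite (card0_eq (eqP _)) // -leqn0.
have [->|/has_leaf [l lU l_leaf]] := eqVneq U set0.
  by exists (fun _ => 1) => // i; rewrite inE.
have [h hpos hrel] : exists2 h : 'I_n -> R, (forall i, 0 < h i) &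
    {in U :\ l &, forall i j, A i j * h j = A j i * h i}.
  by apply: IH; move: hU; rewrite (cardsD1 l) lU.
have far j : j != l -> ~~ e l j -> A l j = 0 /\ A j l = 0.
  move=> jl nlj; split; apply/eqP; apply/negPn.
    by rewrite Apat 1?eq_sym // (negPf nlj).
  by rewrite Apat // e_sym (negPf nlj).
pose hl := if [pick p in U | e l p] is Some p then h p * A l p / A p l else 1.
exists (fun x => if x == l then hl else h x).
  move=> i; case: eqP => // _; rewrite /hl; case: pickP => [p /andP [_ lp]|_] //.
  have pl : p != l by apply: contraTneq lp => ->; rewrite e_irr.
  have Apl : A p l != 0 by rewrite Apat // e_sym.
  have -> : h p * A l p / A p l = h p * (A l p * A p l) / (A p l * A p l) by field.
  apply: divr_gt0; first exact: mulr_gt0 (hpos p) (Apos lp).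
  by rewrite lt0r mulf_neq0 //= -expr2 sqr_ge0.
have rel_l j : j \in U -> A l j * (if j == l then hl else h j) = A j l * hl.
  move=> jU; case: (eqVneq j l) => [->//|jl]; rewrite /hl.
  case: pickP => [p /andP [pU lp]|none]; last first.
    have nlj : ~~ e l j by move: (none j); rewrite /= jU => /negbT.
    by have [-> ->] := far j jl nlj; rewrite !mul0r.
  have pl : p != l by apply: contraTneq lp => ->; rewrite e_irr.
  have Apl : A p l != 0 by rewrite Apat // e_sym.
  case: (eqVneq j p) => [->|jp]; first by field.
  have nlj : ~~ e l j.
    apply: contra jp => lj; apply/eqP.
    by move/card_le1_eqP: l_leaf; apply; rewrite inE ?jU ?pU.
  by have [-> ->] := far j jl nlj; rewrite !mul0r.
move=> i j iU jU /=; case: (eqVneq i l) => [->|il]; first exact: rel_l.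
case: (eqVneq j l) => [->|jl].
  by rewrite ?eqxx; have := rel_l i iU; rewrite (negPf il) => ->.
by apply: hrel; rewrite in_setD1 ?il ?jl.
Qed.

End Symmetrizer.

(* For a matrix symmetrized by positive weights, the kernel and the image
   meet trivially: a vector v = w M with v M = 0 has weighted norm
   sum_j h_j v_j^2 = w M H M^T w^T = 0. *)
Lemma kermx_cap_img0 (R : realFieldType) n (M : 'M[R]_n) (h : 'I_n -> R) :
  (forall i, 0 < h i) -> (forall i j, M i j * h j = M j i * h i) ->
  (kermx M :&: M)%MS = 0.
Proof.
move=> hpos hrel; apply/row_matrixP => i; rewrite row0; set v := row i _.
have vK : v *m M = 0.
  by apply/sub_kermxP; exact: submx_trans (row_sub i _) (capmxSl _ _).
have [w vw] : exists w : 'rV_n, v = w *m M.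
  by apply/submxP; exact: submx_trans (row_sub i _) (capmxSr _ _).
have norm0 : \sum_j v 0 j * h j * v 0 j = 0.
  transitivity (\sum_j \sum_k w 0 k * (M k j * h j) * v 0 j).
    apply: eq_bigr => j _; rewrite {1}vw mxE !big_distrl /=.
    by apply: eq_bigr => k _; rewrite mulrA.
  rewrite exchange_big /=; transitivity (\sum_k w 0 k * h k * (v *m M) 0 k).
    apply: eq_bigr => k _; rewrite mxE big_distrr /=.
    by apply: eq_bigr => j _; rewrite hrel; ring.
  by rewrite vK big1 // => k _; rewrite mxE mulr0.
apply/rowP => j; rewrite [RHS]mxE -[LHS]/(v 0 j).
have : v 0 j * h j * v 0 j = 0.
  apply: (psumr_eq0P _ norm0) => // k _.
  by rewrite mulrC mulrA -expr2 mulr_ge0 ?sqr_ge0 // ltW.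
by move/eqP; rewrite mulrC mulrA -expr2 mulf_eq0 (gt_eqF (hpos j)) orbF sqrf_eq0 => /eqP.
Qed.

Lemma in_RT_pattern (R : realType) n (e : rel 'I_n) (A : 'M[R]_n) :
  irreflexive e -> in_RT e A ->
  offdiag_pattern e A /\ (forall i j, e i j -> 0 < A i j * A j i).
Proof.
move=> e_irr RT; split=> [i j ij|i j eij].
  by have [h _] := RT i j ij; apply/idP/idP => H; apply/h.
have ij : i != j by apply: contraTneq eij => ->; rewrite e_irr.
by have [_ h] := RT i j ij; apply: h.
Qed.

Lemma singular_block_of_nullity (R : realType) n (e : rel 'I_n) (A : 'M[R]_n) c
    (Ts : 'I_c -> {set 'I_n}) :
  is_tree e -> offdiag_pattern e A -> mutually_independent e Ts ->
  (path_cover_number e (~: \bigcup_(i < c) Ts i) < nullity A)%N ->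
  exists i : 'I_c, \det (psubmx A (Ts i)) = 0.
Proof.
move=> tree Apat indep lt.
have [/existsP [i /eqP Ai]|/existsPn nz] := boolP [exists i, \det (psubmx A (Ts i)) == 0].
  by exists i.
by move: lt; rewrite ltnNge nullity_le_path_cover.
Qed.

(* Algebraic multiplicity is at most geometric multiplicity, since A is
   symmetrizable by positive weights. *)
Lemma alg_mult_le_nullity (R : realType) n (e : rel 'I_n) (A : 'M[R]_n) lam :
  is_tree e -> offdiag_pattern e A -> (forall i j, e i j -> 0 < A i j * A j i) ->
  (alg_mult A lam <= nullity (A - lam%:M))%N.
Proof.
move=> tree Apat Apos; have [[e_irr e_sym] _] := tree.
have [h hpos hrel] := symmetrizer_on e_irr e_sym (tree_has_leaf tree) Apat Apos
  (leqnn #|[set: 'I_n]|).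
have Mrel i j : (A - lam%:M) i j * h j = (A - lam%:M) j i * h i.
  rewrite !mxE; case: (eqVneq i j) => [->//|ij].
  by rewrite !mulr0n !subr0; apply: hrel; rewrite inE.
by rewrite /alg_mult /nullity -mxrank_ker mup_le_rank_ker // (kermx_cap_img0 hpos Mrel).
Qed.

Lemma psubmx_shift (R : realType) n (A : 'M[R]_n) (S : {set 'I_n}) lam :
  psubmx (A - lam%:M) S = psubmx A S - lam%:M.
Proof. by apply/matrixP => x y; rewrite !mxE (inj_eq enum_val_inj). Qed.

Theorem mainTheorem9 (R : realType) (n : nat) (e : rel 'I_n) (A : 'M[R]_n)
  (c : nat) (Ts : 'I_c -> {set 'I_n}) :
  is_tree e -> in_RT e A ->
  (forall i, is_subtree e (Ts i)) -> mutually_independent e Ts ->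
  let W := ~: (\bigcup_(i < c) Ts i) in
  ((path_cover_number e W < nullity A)%N ->
     exists i : 'I_c, \det (psubmx A (Ts i)) = 0) /\
  (forall lam : R, eigenvalue A lam ->
     (path_cover_number e W < alg_mult A lam)%N ->
     exists i : 'I_c, eigenvalue (psubmx A (Ts i)) lam).
Proof.
move=> tree RT _ indep W; have [[e_irr _] _] := tree.
have [Apat Apos] := in_RT_pattern e_irr RT.
split; first exact: singular_block_of_nullity.
move=> lam _ lt.
have [i Mi] := singular_block_of_nullity tree (offdiag_pattern_shift lam Apat) indep
  (leq_trans lt (alg_mult_le_nullity lam tree Apat Apos)).
exists i; rewrite /eigenvalue /eigenspace kermx_eq0 row_free_unit unitmxE unitfE negbK.
by rewrite -psubmx_shift Mi.
Qed.
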